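(* For every $\lambda,\lambda'\in\mathbf{R}$ there exists an integer $l\geq 0$ such that for every $f\in\mathcal{C}^{\lambda\text{-an}}(\mathbf{Z}_p^d,M)$, the restriction $f|_{p^l\mathbf{Z}_p^d}$ lies in $\mathcal{C}^{\lambda'\text{-an}}(p^l\mathbf{Z}_p^d,M)$, i.e. the function $\underline{x}\mapsto f(p^l\underline{x})$ lies in $\mathcal{C}^{\lambda'\text{-an}}(\mathbf{Z}_p^d,M)$.
   Context: A valuation on a ring (or module) is a map $\mathrm{val}$ to $(-\infty,\infty]$ with $\mathrm{val}(x)=\infty$ iff $x=0$, $\mathrm{val}(xy)\geq\mathrm{val}(x)+\mathrm{val}(y)$ (for modules: $\mathrm{val}(rm)\geq \mathrm{val}(r)+\mathrm{val}(m)$) and $\mathrm{val}(x+y)\geq\min(\mathrm{val}(x),\mathrm{val}(y))$. Let $R$ be a $\mathbf{Z}_p$-algebra which is a Tate ring with a valuation $\mathrm{val}_R$ such that $\mathrm{val}_R(p)>0$, and let $M$ be an $R$-module with a compatible valuation $\mathrm{val}_M$. For $\underline{y}\in\mathbf{Z}_p^d$ and $f:\mathbf{Z}_p^d\to M$ put $\Delta_{\underline{y}}(f)(\underline{x})=f(\underline{x}+\underline{y})-f(\underline{x})$. Let $1_i$ be the $i$-th standard basis vector, $\Delta_i=\Delta_{1_i}$, $\Delta^{\underline{n}}=\Delta_1^{n_1}\circ\cdots\circ\Delta_d^{n_d}$ for $\underline{n}\in\mathbf{Z}_{\geq0}^d$, and $a_{\underline{n}}(f)=\Delta^{\underline{n}}(f)(\underline{0})$,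 $|\underline{n}|=\sum_i n_i$. Let $\mathcal{C}^{\lambda\text{-an}}(\mathbf{Z}_p^d,M)$ be the set of continuous $f:\mathbf{Z}_p^d\to M$ with $\mathrm{val}_M(a_{\underline{n}}(f))-p^\lambda|\underline{n}|\to\infty$ as $|\underline{n}|\to\infty$. The space $\mathcal{C}^{\lambda'\text{-an}}(p^l\mathbf{Z}_p^d,M)$ is defined by transporting this definition along the homeomorphism $\mathbf{Z}_p^d\to p^l\mathbf{Z}_p^d$, $\underline{x}\mapsto p^l\underline{x}$. *)

From HB Require Import structures.
From mathcomp Require Import all_boot all_order all_algebra.
From mathcomp Require Import all_classical all_reals all_analysis.
From mathcomp Require Import Rstruct Rstruct_topology.
Set Implicit Arguments.
Unset Strict Implicit.
Unset Printing Implicit Defensive.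
Import Order.TTheory GRing.Theory Num.Theory.

(* p-adic integers Z_p as the inverse limit of Z/p^n Z:                *)
Definition zp_cond (p : nat) (x : nat -> nat) : Prop :=
  forall n, x n.+1 %% p ^ n = x n /\ x n %% p ^ n = x n.

Record Zpadic (p : nat) := MkZp { zval :> nat -> nat ; zvalP : zp_cond p zval }.

Lemma zp_op_cond p (x : Zpadic p) (op : nat -> nat -> nat) (y : Zpadic p) :
  (forall a b c d n, a = c %[mod p ^ n] -> b = d %[mod p ^ n] ->
      op a b = op c d %[mod p ^ n]) ->
  zp_cond p (fun n => op (x n) (y n) %% p ^ n).
Proof.
move=> hop n; split; last by rewrite modn_mod.
have hd : p ^ n %| p ^ n.+1 by rewrite expnS dvdn_mull.
rewrite modn_dvdm //; apply: hop.
- by have [-> ->] := zvalP x n.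
- by have [-> ->] := zvalP y n.
Qed.

Lemma zp_add_op p a b c d n : a = c %[mod p ^ n] -> b = d %[mod p ^ n] ->
  a + b = c + d %[mod p ^ n].
Proof. by move=> ha hb; rewrite -modnDm ha hb modnDm. Qed.

Lemma zp_mul_op p a b c d n : a = c %[mod p ^ n] -> b = d %[mod p ^ n] ->
  a * b = c * d %[mod p ^ n].
Proof. by move=> ha hb; rewrite -modnMm ha hb modnMm. Qed.

Definition zp_add p (x y : Zpadic p) : Zpadic p := MkZp (zp_op_cond x y (@zp_add_op p)).
Definition zp_mul p (x y : Zpadic p) : Zpadic p := MkZp (zp_op_cond x y (@zp_mul_op p)).

Lemma zp_nat_cond p k : zp_cond p (fun n => k %% p ^ n).
Proof.
move=> n; split; last by rewrite modn_mod.
by rewrite modn_dvdm // expnS dvdn_mull.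
Qed.

Definition zp_nat (p k : nat) : Zpadic p := MkZp (zp_nat_cond p k).
Definition zp_one (p : nat) : Zpadic p := zp_nat p 1.

Local Open Scope ring_scope.
Local Open Scope ereal_scope.

Definition is_ring_valuation (A : comNzRingType) (v : A -> \bar Rdefinitions.R) : Prop :=
  [/\ forall x, v x = +oo <-> x = 0%R,
      forall x, v x != -oo,
      forall x y, v x + v y <= v (x * y)%R
    & forall x y, Order.min (v x) (v y) <= v (x + y)%R].

Definition is_module_valuation (A : comNzRingType) (vA : A -> \bar Rdefinitions.R)
    (M : lmodType A) (v : M -> \bar Rdefinitions.R) : Prop :=
  [/\ forall m, v m = +oo <-> m = 0%R,
      forall m, v m != -oo,
      forall (r : A) m, vA r + v m <= v (r *: m)
    & forall m n, Order.min (v m) (v n) <= v (m + n)%R].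

Definition is_Zp_algebra_map (p : nat) (A : comNzRingType) (phi : Zpadic p -> A) : Prop :=
  [/\ forall x y, phi (zp_add x y) = (phi x + phi y)%R,
      forall x y, phi (zp_mul x y) = (phi x * phi y)%R
    & phi (zp_one p) = 1%R].

(* Tate ring (topology defined by the valuation): A has a topologically
   nilpotent unit *)
Definition is_Tate_valued (A : comNzRingType) (v : A -> \bar Rdefinitions.R) : Prop :=
  exists w : A, (exists w', (w * w' = 1)%R) /\
    forall e : Rdefinitions.R, exists n0 : nat, forall n : nat,
      (n0 <= n)%N -> e%:E <= v (w ^+ n)%R.

Section Mahler.
Variables (p d : nat) (M : zmodType).

Definition zpv_add (x y : 'I_d -> Zpadic p) : 'I_d -> Zpadic p :=
  fun i => zp_add (x i) (y i).

Definition zpv_zero : 'I_d -> Zpadic p := fun _ => zp_nat p 0.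

Definition zpv_unit (i : 'I_d) : 'I_d -> Zpadic p :=
  fun j => if j == i then zp_one p else zp_nat p 0.

Definition zpv_scale_pl (l : nat) (x : 'I_d -> Zpadic p) : 'I_d -> Zpadic p :=
  fun i => zp_mul (zp_nat p (p ^ l)) (x i).

Definition Delta (y : 'I_d -> Zpadic p) (f : ('I_d -> Zpadic p) -> M) :
    ('I_d -> Zpadic p) -> M :=
  fun x => (f (zpv_add x y) - f x)%R.

Definition Delta_pow (n : 'I_d -> nat) :
    (('I_d -> Zpadic p) -> M) -> (('I_d -> Zpadic p) -> M) :=
  foldr (fun i F => fun f => iter (n i) (Delta (zpv_unit i)) (F f)) id
        (enum 'I_d).

Definition mahler_coef (n : 'I_d -> nat) (f : ('I_d -> Zpadic p) -> M) : M :=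
  Delta_pow n f zpv_zero.

Definition multi_abs (n : 'I_d -> nat) : nat := (\sum_(i < d) n i)%N.

Definition zpv_near (k : nat) (x y : 'I_d -> Zpadic p) : Prop :=
  forall i, zval (x i) k = zval (y i) k.

Variable vM : M -> \bar Rdefinitions.R.

Definition zp_continuous (f : ('I_d -> Zpadic p) -> M) : Prop :=
  forall (x : 'I_d -> Zpadic p) (e : Rdefinitions.R), exists k : nat,
    forall y, zpv_near k x y -> e%:E <= vM (f y - f x)%R.

Definition is_lambda_an (lam : Rdefinitions.R) (f : ('I_d -> Zpadic p) -> M) : Prop :=
  zp_continuous f /\
  forall B : Rdefinitions.R, exists N : nat, forall n : 'I_d -> nat,
    (N <= multi_abs n)%N ->
    B%:E <= vM (mahler_coef n f)
            - ((p%:R `^ lam) * (multi_abs n)%:R)%R%:E.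

End Mahler.

(** The Mahler coefficients of [g := f (p^l .)] are those of [f] pushed
    through the operators [Delta_{p^l 1_i} = sum_(1 <= j <= p^l) 'C(p^l, j) Delta_i^j].
    Since [p^(l - v_p j)] divides ['C(p^l, j)], a term with [v_p j] small gains
    valuation from the binomial coefficient, while a term with [v_p j] large
    has [j >= p^(v_p j)] large and gains [p^lam * j] from the growth of the
    coefficients of [f].  For [l] large each application of [Delta_{p^l 1_i}]
    therefore raises the lower bound on the valuations by [p^lam' + 1], so that
    [val (a_n g) >= (p^lam' + 1) |n|] for [|n|] large. *)
From mathcomp Require Import all_boot all_order all_algebra.
From mathcomp Require Import all_classical all_reals all_analysis.
From mathcomp Require Import Rstruct Rstruct_topology.
From mathcomp Require Import ring lra zify.
Import Order.TTheory GRing.Theory Num.Theory.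
Set Implicit Arguments.
Unset Strict Implicit.
Unset Printing Implicit Defensive.

Local Notation R := Rdefinitions.R.

Lemma zp_eq p (x y : Zpadic p) : zval x =1 zval y -> x = y.
Proof.
case: x y => [fx hx] [fy hy] /= /funext E; subst fy.
by congr MkZp; exact: Prop_irrelevance.
Qed.

Lemma zval_mod p (x : Zpadic p) n : zval x n %% p ^ n = zval x n.
Proof. by case: (zvalP x n). Qed.

Lemma zp_add0 p (x : Zpadic p) : zp_add x (zp_nat p 0) = x.
Proof. by apply: zp_eq => n /=; rewrite mod0n addn0 zval_mod. Qed.

Lemma zp_addAC p (x y z : Zpadic p) :
  zp_add (zp_add x y) z = zp_add (zp_add x z) y.
Proof. by apply: zp_eq => n /=; rewrite !modnDml addnAC. Qed.

Lemma zp_add_natS p (x : Zpadic p) m :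
  zp_add (zp_add x (zp_nat p m)) (zp_one p) = zp_add x (zp_nat p m.+1).
Proof.
apply: zp_eq => n /=; rewrite modnDml modnDmr -addnA modnDmr.
by apply/eqP; rewrite eqn_modDl modnDml addn1.
Qed.

Lemma zp_mulDr p (c x y : Zpadic p) :
  zp_mul c (zp_add x y) = zp_add (zp_mul c x) (zp_mul c y).
Proof. by apply: zp_eq => n /=; rewrite modnMmr modnDm mulnDr. Qed.

Lemma zp_mul_nat0 p c : zp_mul (zp_nat p c) (zp_nat p 0) = zp_nat p 0.
Proof. by apply: zp_eq => n /=; rewrite mod0n muln0 mod0n. Qed.

Lemma zp_mul_nat1 p c : zp_mul (zp_nat p c) (zp_one p) = zp_nat p c.
Proof. by apply: zp_eq => n /=; rewrite modnMm muln1. Qed.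

Section Vectors.
Variables p d : nat.
Local Notation X := ('I_d -> Zpadic p).

Definition zpv_nat_unit (i : 'I_d) (m : nat) : X :=
  fun j => if j == i then zp_nat p m else zp_nat p 0.

Lemma zpv_addAC (x y z : X) :
  zpv_add (zpv_add x y) z = zpv_add (zpv_add x z) y.
Proof. by apply: funext => k; rewrite /zpv_add zp_addAC. Qed.

Lemma zpv_add_nat_unit0 i (x : X) : zpv_add x (zpv_nat_unit i 0) = x.
Proof.
by apply: funext => k; rewrite /zpv_add /zpv_nat_unit; case: ifP; rewrite zp_add0.
Qed.

Lemma zpv_add_nat_unitS i m (x : X) :
  zpv_add x (zpv_nat_unit i m.+1) =
  zpv_add (zpv_add x (zpv_nat_unit i m)) (zpv_unit p i).
Proof.
apply: funext => k; rewrite /zpv_add /zpv_nat_unit /zpv_unit.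
by case: ifP => _; rewrite ?zp_add_natS ?zp_add0.
Qed.

Variable l : nat.
Local Notation S := (@zpv_scale_pl p d l).

Lemma zpv_scale_plD (x y : X) : S (zpv_add x y) = zpv_add (S x) (S y).
Proof. by apply: funext => k; rewrite /zpv_scale_pl /zpv_add zp_mulDr. Qed.

Lemma zpv_scale_pl0 : S (@zpv_zero p d) = @zpv_zero p d.
Proof. by apply: funext => k; rewrite /zpv_scale_pl /zpv_zero zp_mul_nat0. Qed.

Lemma zpv_scale_pl_unit i : S (zpv_unit p i) = zpv_nat_unit i (p ^ l).
Proof.
apply: funext => k; rewrite /zpv_scale_pl /zpv_unit /zpv_nat_unit.
by case: ifP => _; rewrite ?zp_mul_nat1 ?zp_mul_nat0.
Qed.

Lemma zpv_near_scale_pl k (x y : X) : zpv_near k x y -> zpv_near k (S x) (S y).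
Proof. by move=> xy i; rewrite /zpv_scale_pl /= xy. Qed.

End Vectors.

Section FiniteDifferences.
Variables (p d : nat) (M : zmodType).
Local Notation X := ('I_d -> Zpadic p).
Local Open Scope ring_scope.

Definition Delta_mpow (w : 'I_d -> X) (s : seq 'I_d) (n : 'I_d -> nat) :
    (X -> M) -> X -> M :=
  foldr (fun i F f => iter (n i) (Delta (w i)) (F f)) id s.

Lemma Delta_pow_mpow n (h : X -> M) :
  Delta_pow n h = Delta_mpow (zpv_unit p (d:=d)) (enum 'I_d) n h.
Proof. by []. Qed.

Definition mindex_add (n : 'I_d -> nat) (i : 'I_d) (j : nat) : 'I_d -> nat :=
  fun k => if k == i then (n k + j)%N else n k.

Lemma multi_abs_mindex_add n i j :
  multi_abs (mindex_add n i j) = (multi_abs n + j)%N.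
Proof.
rewrite /multi_abs (bigD1 i) //= [in RHS](bigD1 i) //= /mindex_add eqxx.
rewrite -addnA addnAC addnA; congr (_ + _)%N.
by apply: eq_bigr => k /negPf ->.
Qed.

Lemma Delta_sum y m (F : 'I_m -> X -> M) (c : 'I_m -> nat) :
  Delta y (fun x => \sum_(j < m) F j x *+ c j) =
  fun x => \sum_(j < m) Delta y (F j) x *+ c j.
Proof.
by apply: funext => x; rewrite /Delta -sumrB; apply: eq_bigr => j _; rewrite mulrnBl.
Qed.

Lemma Delta_mpow_sum w s n m (F : 'I_m -> X -> M) (c : 'I_m -> nat) :
  Delta_mpow w s n (fun x => \sum_(j < m) F j x *+ c j) =
  fun x => \sum_(j < m) Delta_mpow w s n (F j) x *+ c j.
Proof.
elim: s => [|a s IH] //=; rewrite IH.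
by elim: (n a) => [|k IHk] //=; rewrite IHk Delta_sum.
Qed.

Lemma DeltaC y z (h : X -> M) : Delta y (Delta z h) = Delta z (Delta y h).
Proof.
apply: funext => x; rewrite /Delta zpv_addAC.
by rewrite !opprB !addrA addrAC [RHS]addrAC; congr (_ + _); rewrite addrAC.
Qed.

Lemma Delta_mpowC y w s n (h : X -> M) :
  Delta y (Delta_mpow w s n h) = Delta_mpow w s n (Delta y h).
Proof.
elim: s => [|a s IH] //=; rewrite -IH.
by elim: (n a) => [|k IHk] //=; rewrite DeltaC IHk.
Qed.

Lemma iter_Delta_mpowC y j w s n (h : X -> M) :
  iter j (Delta y) (Delta_mpow w s n h) = Delta_mpow w s n (iter j (Delta y) h).
Proof. by elim: j => [|j IH] //=; rewrite IH Delta_mpowC. Qed.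

Lemma eq_in_Delta_mpow w s n n' (h : X -> M) :
  {in s, n =1 n'} -> Delta_mpow w s n h = Delta_mpow w s n' h.
Proof.
elim: s => [|a s IH] //= nn'.
rewrite nn' ?mem_head // IH // => k ks.
by apply: nn'; rewrite in_cons ks orbT.
Qed.

Lemma Delta_mpow0 w s (h : X -> M) : Delta_mpow w s (fun _ => 0%N) h = h.
Proof. by elim: s => [|a s IH] //=; rewrite IH. Qed.

Lemma Delta_mpow_iter w s n i j (h : X -> M) : uniq s -> i \in s ->
  Delta_mpow w s n (iter j (Delta (w i)) h) = Delta_mpow w s (mindex_add n i j) h.
Proof.
elim: s => [|a s IH] //= /andP [as_ us]; rewrite in_cons => /orP [/eqP ia | is_].
  subst a; rewrite (@eq_in_Delta_mpow w s (mindex_add n i j) n); last first.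
    by move=> k ks; rewrite /mindex_add; case: eqP => // ki; rewrite -ki ks in as_.
  by rewrite /mindex_add eqxx iterD -iter_Delta_mpowC.
rewrite IH //; congr iter; rewrite /mindex_add; case: eqP => // ai.
by rewrite ai is_ in as_.
Qed.

(* Newton's forward-difference formula along the [i]-th coordinate. *)
Lemma shift_nat_unitE i m (h : X -> M) x :
  h (zpv_add x (zpv_nat_unit p i m)) =
  \sum_(j < m.+1) iter j (Delta (zpv_unit p i)) h x *+ 'C(m, j).
Proof.
elim: m h => [|m IH] h; first by rewrite zpv_add_nat_unit0 big_ord_recl big_ord0 addr0.
have -> : h (zpv_add x (zpv_nat_unit p i m.+1)) =
   h (zpv_add x (zpv_nat_unit p i m)) +
   Delta (zpv_unit p i) h (zpv_add x (zpv_nat_unit p i m)).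
  by rewrite zpv_add_nat_unitS /Delta addrC subrK.
rewrite !IH [RHS]big_ord_recl /= bin0.
under [X in _ = _ + X]eq_bigr => j _ do rewrite binS mulrnDr.
rewrite big_split /= addrA; congr (_ + _); last first.
  by apply: eq_bigr => j _; rewrite add0n -iterS iterSr.
rewrite [in RHS]big_ord_recr /= bin_small // mulr0n addr0.
by rewrite big_ord_recl /= bin0.
Qed.

Lemma Delta_nat_unitE i m (h : X -> M) :
  Delta (zpv_nat_unit p i m) h =
  fun x => \sum_(j < m) iter j.+1 (Delta (zpv_unit p i)) h x *+ 'C(m, j.+1).
Proof.
apply: funext => x; rewrite {1}/Delta shift_nat_unitE big_ord_recl /= bin0 mulr1n.
by rewrite addrC addKr; apply: eq_bigr => j _; rewrite add0n -iterS.
Qed.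

Lemma mahler_coef_Delta_nat_unit i m n (h : X -> M) :
  mahler_coef n (Delta (zpv_nat_unit p i m) h) =
  \sum_(j < m) mahler_coef (mindex_add n i j.+1) h *+ 'C(m, j.+1).
Proof.
rewrite /mahler_coef Delta_nat_unitE Delta_pow_mpow Delta_mpow_sum.
apply: eq_bigr => j _.
by rewrite Delta_pow_mpow -Delta_mpow_iter ?enum_uniq ?mem_enum.
Qed.

Variable l : nat.
Local Notation S := (@zpv_scale_pl p d l).

Lemma Delta_scale_pl y (h : X -> M) :
  Delta y (h \o S) = Delta (S y) h \o S.
Proof. by apply: funext => x; rewrite /Delta /= zpv_scale_plD. Qed.

Lemma mahler_coef_scale_pl n (f : X -> M) :
  mahler_coef n (f \o S) =
  Delta_mpow (fun i => zpv_nat_unit p i (p ^ l)) (enum 'I_d) n f (@zpv_zero p d).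
Proof.
rewrite /mahler_coef -[in RHS](zpv_scale_pl0 p d l) Delta_pow_mpow.
suff -> : forall s, Delta_mpow (zpv_unit p (d:=d)) s n (f \o S) =
    Delta_mpow (fun i => zpv_nat_unit p i (p ^ l)) s n f \o S by [].
elim=> [|a s IH] //=; rewrite IH -zpv_scale_pl_unit.
by elim: (n a) => [|k IHk] //=; rewrite IHk Delta_scale_pl.
Qed.

End FiniteDifferences.

Lemma zp_continuous_scale_pl p d (M : zmodType) (vM : M -> \bar R) l
    (f : ('I_d -> Zpadic p) -> M) :
  zp_continuous vM f -> zp_continuous vM (fun x => f (zpv_scale_pl l x)).
Proof.
move=> cf x e; have [k hk] := cf (zpv_scale_pl l x) e.
by exists k => y xy; apply/hk/zpv_near_scale_pl.
Qed.

Lemma dvdn_bin_pexp p l m : prime p -> (m < p ^ l)%N ->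
  (p ^ (l - logn p m.+1) %| 'C(p ^ l, m.+1))%N.
Proof.
move=> pp ml; have p0 := prime_gt0 pp.
have hC : (0 < 'C(p ^ l, m.+1))%N by rewrite bin_gt0.
have hC' : (0 < 'C((p ^ l).-1, m))%N by rewrite bin_gt0 -ltnS prednK ?expn_gt0 ?p0.
have E : (logn p m.+1 + logn p 'C(p ^ l, m.+1) = l + logn p 'C((p ^ l).-1, m))%N.
  by rewrite -lognM // -mul_bin_diag lognM ?expn_gt0 ?p0 // pfactorK.
apply: dvdn_trans (pfactor_dvdnn p _); rewrite dvdn_exp2l //.
by rewrite leq_subLR E leq_addr.
Qed.

Local Open Scope ring_scope.
Local Open Scope ereal_scope.

Section Valuations.
Variables (A : comNzRingType) (valA : A -> \bar R).
Hypothesis hvalA : is_ring_valuation valA.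

Lemma valA1_finE : valA 1 = (fine (valA 1))%:E.
Proof.
case: hvalA => val_oo val_noo _ _; rewrite fineK // fin_numE val_noo.
by apply/eqP => /val_oo/eqP; rewrite oner_eq0.
Qed.

Lemma valA_natr u : valA 1 <= valA u%:R.
Proof.
case: hvalA => val_oo _ _ valD; elim: u => [|u IH].
  by rewrite [X in _ <= X](proj2 (val_oo _)) ?leey.
by rewrite -addn1 natrD; apply: le_trans (valD _ _); rewrite le_min IH /=.
Qed.

Lemma valA_exprn (a : R) (x : A) e :
  a%:E <= valA x -> (e%:R * a)%:E + valA 1 <= valA (x ^+ e).
Proof.
case: hvalA => _ _ valAM _ ax; elim: e => [|e IH]; first by rewrite mul0r add0e.
rewrite exprS; apply: le_trans (valAM _ _).
by rewrite -nat1r mulrDl mul1r EFinD -addeA leeD.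
Qed.

Variables (M : lmodType A) (valM : M -> \bar R).
Hypothesis hvalM : is_module_valuation valA valM.

Lemma valM_sum (r : \bar R) m (F : 'I_m -> M) :
  (forall j, r <= valM (F j)) -> r <= valM (\sum_(j < m) F j).
Proof.
case: hvalM => val_oo _ _ valD rF.
apply: (big_ind (fun y => r <= valM y)) => // [|x y rx ry].
  by rewrite (proj2 (val_oo _)) ?leey.
by apply: le_trans (valD x y); rewrite le_min rx ry.
Qed.

Lemma valM_mulrn (y : M) c : valA c%:R + valM y <= valM (y *+ c).
Proof. by case: hvalM => _ _ valZ _; rewrite -scaler_nat. Qed.

End Valuations.

Lemma exists_natr_mul_ge (T a : R) : (0 < a)%R ->
  exists m0 : nat, forall m, (m0 <= m)%N -> (T <= m%:R * a)%R.
Proof.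
move=> a_gt0; set m0 := Num.Def.archi_bound (`|T| / a); exists m0 => m m0m.
have : (`|T| / a < m0%:R)%R by apply: archi_boundP; rewrite divr_ge0 ?normr_ge0 ?ltW.
rewrite ltr_pdivrMr // => /ltW Tm0; apply: le_trans (ler_norm T) _.
by apply: le_trans Tm0 _; rewrite ler_pM2r // ler_nat.
Qed.

Section BinomialValuation.
Variables (A : comNzRingType) (valA : A -> \bar R).
Hypothesis hvalA : is_ring_valuation valA.
Variable p : nat.
Hypothesis pp : prime p.

Lemma valA_bin_pexp_ge (a : R) l m : a%:E <= valA p%:R -> (m < p ^ l)%N ->
  ((l - logn p m.+1)%:R * a + 2 * fine (valA 1))%:E <= valA 'C(p ^ l, m.+1)%:R.
Proof.
move=> a_le m_lt; have [u ->] := dvdnP (dvdn_bin_pexp pp m_lt).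
have [_ _ valAM _] := hvalA; rewrite natrM natrX; apply: le_trans (valAM _ _).
have u_ge := valA_natr hvalA u; have pe_ge := valA_exprn hvalA (l - logn p m.+1) a_le.
rewrite valA1_finE // in u_ge pe_ge; apply: le_trans (leeD u_ge pe_ge).
by rewrite -!EFinD lee_fin; lra.
Qed.

(* With [l = 2 m0] either [v_p j <= m0], and then [p^m0] divides ['C(p^l, j)],
   or [j >= p^(v_p j) > m0]. *)
Lemma valA_bin_pexp_gain (alpha K : R) : (0 < alpha)%R -> 0 < valA p%:R ->
  exists l, forall m, (m < p ^ l)%N ->
    K%:E <= valA 'C(p ^ l, m.+1)%:R + (alpha * m.+1%:R)%:E.
Proof.
move=> alpha_gt0 valp_gt0.
have [a [a_gt0 a_le]] : exists a : R, (0 < a)%R /\ a%:E <= valA p%:R.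
  case: (valA p%:R) valp_gt0 => [r r_gt0|_|]; last by rewrite ltNge leNye.
    by exists r; rewrite -lte_fin.
  by exists 1%R; rewrite leey.
set c := (K - 2 * fine (valA 1))%R.
have [ma ma_ge] := exists_natr_mul_ge c a_gt0.
have [malpha malpha_ge] := exists_natr_mul_ge c alpha_gt0.
set m0 := maxn ma malpha; exists (m0 + m0)%N => m m_lt.
apply: le_trans _ (leeD (valA_bin_pexp_ge a_le m_lt) (lexx _)).
rewrite -EFinD lee_fin; set v := logn p m.+1.
have alpha_m_ge0 : (0 <= alpha * m.+1%:R)%R by rewrite mulr_ge0 ?ltW.
have va_ge0 : (0 <= (m0 + m0 - v)%:R * a)%R by rewrite mulr_ge0 ?ler0n ?ltW.
have [v_le | v_gt] := leqP v m0.
  have : (m0%:R * a <= (m0 + m0 - v)%:R * a)%R.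
    by rewrite ler_pM2r // ler_nat; lia.
  have := ma_ge m0 (leq_maxl _ _); rewrite /c; lra.
have m0_le : (m0 <= m.+1)%N.
  apply: leq_trans (ltnW v_gt) _; apply: leq_trans (ltnW (ltn_expl v (prime_gt1 pp))) _.
  exact: dvdn_leq (pfactor_dvdnn p m.+1).
have : (alpha * m0%:R <= alpha * m.+1%:R)%R by rewrite ler_pM2l // ler_nat.
have := malpha_ge m0 (leq_maxr _ _); rewrite /c; lra.
Qed.

End BinomialValuation.

Section MahlerBounds.
Variables (p d : nat) (M : zmodType) (valM : M -> \bar R) (alpha : R).
Local Notation X := ('I_d -> Zpadic p).

Definition mahler_lower_bound (h : X -> M) (b : R) (N : nat) : Prop :=
  forall n, (N <= multi_abs n)%N ->
    (b + alpha * (multi_abs n)%:R)%:E <= valM (mahler_coef n h).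

Lemma mahler_lower_bound_le h b N b' N' :
  mahler_lower_bound h b N -> (b' <= b)%R -> (N <= N')%N ->
  mahler_lower_bound h b' N'.
Proof.
move=> hb b'b NN' n N'n; apply: le_trans (hb n (leq_trans NN' N'n)).
by rewrite lee_fin lerD2r.
Qed.

Definition mahler_growth (g : X -> M) : Prop :=
  forall B : R, exists N : nat, forall n, (N <= multi_abs n)%N ->
    B%:E <= valM (mahler_coef n g) - (alpha * (multi_abs n)%:R)%:E.

Lemma mahler_growth_ge (g : X -> M) N0 :
  (forall n, (N0 <= multi_abs n)%N ->
     ((alpha + 1) * (multi_abs n)%:R)%:E <= valM (mahler_coef n g)) ->
  mahler_growth g.
Proof.
move=> g_ge B; have [m0 m0_ge] := exists_natr_mul_ge B ltr01.
exists (maxn N0 m0) => n; rewrite geq_max => /andP [N0n m0n].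
rewrite leeBrDr // -EFinD; apply: le_trans (g_ge _ N0n); rewrite lee_fin.
by have := m0_ge _ m0n; lra.
Qed.

Lemma mahler_growth_lower_bound (g : X -> M) :
  mahler_growth g -> exists N0, mahler_lower_bound g 0%R N0.
Proof.
move=> g_growth; have [N0 N0_ge] := g_growth 0%R.
by exists N0 => n /N0_ge; rewrite sube_ge0 ?orbT // add0r.
Qed.

End MahlerBounds.

Section LowerBoundPropagation.
Variables (A : comNzRingType) (valA : A -> \bar R).
Variables (M : lmodType A) (valM : M -> \bar R).
Hypothesis hvalM : is_module_valuation valA valM.
Variables (p d : nat) (alpha : R).
Local Notation X := ('I_d -> Zpadic p).
Local Notation mahler_lower_bound := (@mahler_lower_bound p d M valM alpha).
Variables (K : R) (P : nat).
Hypothesis bin_gain : forall m, (m < P)%N ->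
  K%:E <= valA 'C(P, m.+1)%:R + (alpha * m.+1%:R)%:E.

Lemma mahler_lower_bound_Delta i h b N :
  mahler_lower_bound h b N ->
  mahler_lower_bound (Delta (zpv_nat_unit p i P) h) (b + K)%R N.-1.
Proof.
move=> hb n Nn; rewrite mahler_coef_Delta_nat_unit; apply: (valM_sum hvalM) => j.
apply: le_trans (valM_mulrn hvalM _ _).
have Nn' : (N <= multi_abs (mindex_add n i j.+1))%N.
  by rewrite multi_abs_mindex_add; lia.
have := hb _ Nn'; rewrite multi_abs_mindex_add => hbj.
have binj : (K - alpha * j.+1%:R)%:E <= valA 'C(P, j.+1)%:R.
  by rewrite EFinB leeBlDr // bin_gain.
apply: le_trans _ (leeD binj hbj).
by rewrite -EFinD lee_fin natrD; lra.
Qed.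

Lemma mahler_lower_bound_iter_Delta i t h b N :
  mahler_lower_bound h b N ->
  mahler_lower_bound (iter t (Delta (zpv_nat_unit p i P)) h)
    (b + K * t%:R)%R (N - t).
Proof.
elim: t => [|t IH] hb /=; first by rewrite mulr0 addr0 subn0.
apply: mahler_lower_bound_le (mahler_lower_bound_Delta i (IH hb)) _ _.
  by rewrite -addn1 natrD; lra.
by rewrite subnS.
Qed.

Lemma mahler_lower_bound_Delta_mpow s k h b N :
  mahler_lower_bound h b N ->
  mahler_lower_bound (Delta_mpow (fun i => zpv_nat_unit p i P) s k h)
    (b + K * (\sum_(i <- s) k i)%N%:R)%R (N - \sum_(i <- s) k i).
Proof.
elim: s => [|a s IH] hb /=; first by rewrite big_nil mulr0 addr0 subn0.
apply: mahler_lower_bound_le (mahler_lower_bound_iter_Delta (t := k a) a (IH hb)) _ _.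
  by rewrite big_cons natrD; lra.
by rewrite big_cons addnC subnDA.
Qed.

End LowerBoundPropagation.

Lemma mahler_coef_scale_pl_ge (A : comNzRingType) (valA : A -> \bar R)
    (M : lmodType A) (valM : M -> \bar R) (hvalM : is_module_valuation valA valM)
    p d (alpha K : R) l
    (bin_gain : forall m, (m < p ^ l)%N ->
       K%:E <= valA 'C(p ^ l, m.+1)%:R + (alpha * m.+1%:R)%:E)
    (f : ('I_d -> Zpadic p) -> M) N0 :
  mahler_lower_bound valM alpha f 0%R N0 ->
  forall n, (N0 <= multi_abs n)%N ->
    (K * (multi_abs n)%:R)%:E <= valM (mahler_coef n (fun x => f (zpv_scale_pl l x))).
Proof.
move=> f_bound n N0n.
have abs0 : multi_abs (fun _ : 'I_d => 0%N) = 0%N by rewrite /multi_abs big1.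
have := mahler_lower_bound_Delta_mpow hvalM bin_gain (s := enum 'I_d) (k := n)
  f_bound (n := fun _ => 0%N).
rewrite big_enum /= -/(multi_abs n) abs0 leqn0 subn_eq0 N0n => /(_ isT).
rewrite add0r mulr0 addr0 /mahler_coef Delta_pow_mpow.
by rewrite Delta_mpow0 -mahler_coef_scale_pl.
Qed.

Theorem corollary2p7
  (p : nat) (hp : prime p) (d : nat)
  (A : comNzRingType) (valA : A -> \bar Rdefinitions.R)
  (phi : Zpadic p -> A) (hphi : is_Zp_algebra_map phi)
  (hvalA : is_ring_valuation valA) (hTate : is_Tate_valued valA)
  (hvalp : (0 < valA p%:R)%E)
  (M : lmodType A) (valM : M -> \bar Rdefinitions.R)
  (hvalM : is_module_valuation valA valM)
  (lam lam' : Rdefinitions.R) :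
  exists l : nat, forall f : ('I_d -> Zpadic p) -> M,
    is_lambda_an valM lam f ->
    is_lambda_an valM lam' (fun x => f (zpv_scale_pl l x)).
Proof.
have p_gt0 : (0 < p%:R :> R)%R by rewrite ltr0n prime_gt0.
have [l bin_gain] :=
  valA_bin_pexp_gain hvalA hp (p%:R `^ lam' + 1)%R (powR_gt0 lam p_gt0) hvalp.
exists l => f [f_cont f_growth]; split; first exact: zp_continuous_scale_pl.
have [N0 f_bound] := mahler_growth_lower_bound f_growth.
apply: (mahler_growth_ge (N0 := N0)) => n N0n.
exact (mahler_coef_scale_pl_ge hvalM bin_gain f_bound N0n).
Qed.
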